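(* Let $n\ge 0$ be an integer and for $k\in\mathbb{Z}_+$ let $$v_k(t)=c_k\,e^{-\frac{t^{2n+2}}{2n+2}}L^{(-\frac{1}{2n+2})}_{k}\!\left(\frac{t^{2n+2}}{n+1}\right),\qquad w_k(t)=d_k\,e^{-\frac{t^{2n+2}}{2n+2}}\,t\,L^{(\frac{1}{2n+2})}_{k}\!\left(\frac{t^{2n+2}}{n+1}\right),$$ with $c_k,d_k>0$ chosen so that $\|t^nv_k\|_{L^2(\mathbb{R})}=\|t^nw_k\|_{L^2(\mathbb{R})}=1$, and let $E_k=4k(n+1)+2n+1$. There exists a constant $C_1>0$ such that for all $k\in\mathbb{Z}_+$ $$\|v_k'\|_{L^\infty(\mathbb{R})}\le C_1E_k^{\frac72-\frac{1}{4n+4}},\qquad \|w_k'\|_{L^\infty(\mathbb{R})}\le C_1E_k^{\frac72-\frac{1}{4n+4}}.$$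
   Context: $L^{(a)}_k$ denotes the generalized Laguerre polynomial of degree $k$ and parameter $a$. These functions solve $-u''+t^{2(2n+1)}u=E\,t^{2n}u$, with $E=E_k$ for $v_k$ and $E=4k(n+1)+2n+3$ for $w_k$. *)

From Stdlib Require Import Reals.
From Coquelicot Require Import Coquelicot.
Open Scope R_scope.

Fixpoint lag_prod (a : R) (i m : nat) : R :=
  match m with
  | O => 1
  | S m' => (a + INR (i + S m')) * lag_prod a i m'
  end.

(* Generalized Laguerre polynomial
   L_k^{(a)}(x) = sum_{i=0}^k (-1)^i binom(k+a, k-i) x^i / i!,
   where binom(k+a, k-i) = prod_{j=i+1}^{k} (a+j) / (k-i)!. *)
Definition laguerre (k : nat) (a x : R) : R :=
  sum_f_R0 (fun i => (-1) ^ i * lag_prod a i (k - i)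
                     / (INR (Factorial.fact (k - i)) * INR (Factorial.fact i)) * x ^ i) k.

Definition v0 (n k : nat) (t : R) : R :=
  exp (- t ^ (2*n+2) / INR (2*n+2)) *
  laguerre k (- / INR (2*n+2)) (t ^ (2*n+2) / INR (n+1)).

Definition w0 (n k : nat) (t : R) : R :=
  exp (- t ^ (2*n+2) / INR (2*n+2)) * t *
  laguerre k (/ INR (2*n+2)) (t ^ (2*n+2) / INR (n+1)).

Definition wL2norm (n : nat) (f : R -> R) : R :=
  sqrt (RInt_gen (fun t => (t ^ n * f t) ^ 2)
          (Rbar_locally m_infty) (Rbar_locally p_infty)).

Definition c_const (n k : nat) : R := / wL2norm n (v0 n k).
Definition d_const (n k : nat) : R := / wL2norm n (w0 n k).

Definition v (n k : nat) (t : R) : R := c_const n k * v0 n k t.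
Definition w (n k : nat) (t : R) : R := d_const n k * w0 n k t.

Definition Ek (n k : nat) : R := INR (4 * k * (n + 1) + 2 * n + 1).

(* Writing [x = t^(2n+2) / (n+1)], the profiles are [t^j e^(-x/2) L_k^(a)(x)] with
   [(j, a) = (0, -1/(2n+2))] for [v] and [(1, 1/(2n+2))] for [w], and the Laguerre equation
   becomes [u'' = - P u] with [P = E t^(2n) - t^(4n+2)], [E = E_k] resp. [E_k + 2].
   For such [u] the ratio [u'^2 / P + u^2] decreases while [P' >= 0], the energy
   [u'^2 + P u^2] decreases once [P' <= 0], and past the zero of [P] the boundedness of [u]
   forces [u u' <= 0], so that [u'^2] decreases. Starting at the point [s] where
   [s^(2n+2) = 1/(6(k+1))], on [[0, s]] the Laguerre polynomial stays within [c0 / 2] of its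
   constant term [c0], which gives [|u'| <= C E (k+1) c0] everywhere and
   [||t^n u||_2 >= c0 / (C (k+1))]. Hence the normalised derivatives are [O(E_k^3)], and
   [3 <= 7/2 - 1/(4n+4)]. *)

From Stdlib Require Import Reals Lra Lia Classical.
From Coquelicot Require Import Coquelicot.
Open Scope R_scope.

Lemma is_derive_ext_eq (f g : R -> R) (x a b : R) :
  (forall t, f t = g t) -> a = b -> is_derive f x a -> is_derive g x b.
Proof. intros Hfg -> Hf. exact (is_derive_ext f g x b Hfg Hf). Qed.

Lemma is_derive_Rplus (f g : R -> R) (x a b : R) :
  is_derive f x a -> is_derive g x b -> is_derive (fun t => f t + g t) x (a + b).
Proof. exact (is_derive_plus f g x a b). Qed.

Lemma is_derive_Rscal (f : R -> R) (k x a : R) :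
  is_derive f x a -> is_derive (fun t => k * f t) x (k * a).
Proof. exact (is_derive_scal f x k a). Qed.

Lemma is_derive_Rmult (f g : R -> R) (x a b : R) :
  is_derive f x a -> is_derive g x b ->
  is_derive (fun t => f t * g t) x (a * g x + f x * b).
Proof. intros Hf Hg. apply (is_derive_mult f g x a b Hf Hg). exact Rmult_comm. Qed.

Lemma is_derive_Rcomp (f g : R -> R) (x a b : R) :
  is_derive f (g x) a -> is_derive g x b -> is_derive (fun t => f (g t)) x (b * a).
Proof. exact (is_derive_comp f g x a b). Qed.

Lemma is_derive_Rpow_id (m : nat) (x : R) : is_derive (fun t => t ^ m) x (INR m * x ^ pred m).
Proof.
  eapply is_derive_ext_eq; [| | exact (is_derive_pow (fun t => t) m x 1 (is_derive_id x))].
  - reflexivity.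
  - simpl; ring.
Qed.

Lemma is_derive_Rexp (f : R -> R) (x a : R) :
  is_derive f x a -> is_derive (fun t => exp (f t)) x (a * exp (f x)).
Proof. intros Hf. exact (is_derive_Rcomp exp f x _ a (is_derive_exp (f x)) Hf). Qed.

Lemma le_of_is_derive_nonneg (f df : R -> R) a b : a <= b ->
  (forall x, a <= x <= b -> is_derive f x (df x)) ->
  (forall x, a <= x <= b -> 0 <= df x) -> f a <= f b.
Proof.
  intros Hab Hd Hpos.
  destruct (MVT_gen f a b df) as [c [Hc Heq]];
    rewrite ?Rmin_left, ?Rmax_right in * by lra.
  - intros x Hx. apply Hd; lra.
  - intros x Hx. apply continuity_pt_filterlim, (ex_derive_continuous f x).
    exists (df x). apply Hd; lra.
  - specialize (Hpos c Hc). nra.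
Qed.

Lemma ge_of_is_derive_nonpos (f df : R -> R) a b : a <= b ->
  (forall x, a <= x <= b -> is_derive f x (df x)) ->
  (forall x, a <= x <= b -> df x <= 0) -> f b <= f a.
Proof.
  intros Hab Hd Hneg.
  enough (- f a <= - f b) by lra.
  apply (le_of_is_derive_nonneg (fun x => - f x) (fun x => - df x)); [exact Hab | |].
  - intros x Hx. apply (is_derive_opp f x (df x)), Hd, Hx.
  - intros x Hx. specialize (Hneg x Hx). lra.
Qed.

Lemma pow_Rpower_inv y m : 0 < y -> (0 < m)%nat -> Rpower y (/ INR m) ^ m = y.
Proof.
  intros Hy Hm. rewrite <- Rpower_pow by apply exp_pos. rewrite Rpower_mult.
  rewrite Rinv_l by (apply not_0_INR; lia). apply Rpower_1, Hy.
Qed.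

Lemma pow_lt_reg x y m : 0 <= x -> 0 <= y -> x ^ m < y ^ m -> x < y.
Proof.
  intros Hx Hy H. destruct (Rlt_or_le x y) as [|Hyx]; [assumption|].
  pose proof (pow_incr y x m (conj Hy Hyx)). lra.
Qed.

Lemma pow_le_one t m : 0 <= t <= 1 -> t ^ m <= 1.
Proof. intros Ht. rewrite <- (pow1 m). apply pow_incr, Ht. Qed.

Lemma pow_le_pow_of_le_one s p q : 0 <= s <= 1 -> (p <= q)%nat -> s ^ q <= s ^ p.
Proof.
  intros Hs Hpq. replace q with (p + (q - p))%nat by lia. rewrite pow_add.
  pose proof (pow_le_one s (q - p) Hs). pose proof (pow_le s p (proj1 Hs)). nra.
Qed.

Lemma pow_le_one_plus_pow s j m : 0 <= s -> (j <= m)%nat -> s ^ j <= 1 + s ^ m.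
Proof.
  intros Hs Hjm. pose proof (pow_le s m Hs). destruct (Rle_or_lt s 1) as [Hs1|Hs1].
  - pose proof (pow_le_one s j (conj Hs Hs1)). lra.
  - assert (1 <= s) as Hs1' by lra. pose proof (Rle_pow s j m Hs1' Hjm). lra.
Qed.

Lemma pow_even_opp t m : (- t) ^ (2 * m) = t ^ (2 * m).
Proof. rewrite !pow_mult. f_equal. ring. Qed.

Lemma INR_S_le_pow2 i : INR (S i) <= 2 ^ i.
Proof.
  induction i as [|i IH]; [simpl; lra|].
  rewrite S_INR. simpl pow. pose proof (pow_R1_Rle 2 i ltac:(lra)). lra.
Qed.

Lemma sq_le_of_Rabs_le x b : Rabs x <= b -> x * x <= b * b.
Proof.
  intros Hx. pose proof (Rabs_pos x).
  replace (x * x) with (Rabs x * Rabs x) by (rewrite <- Rabs_mult; apply Rabs_right; nra).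
  apply Rmult_le_compat; lra.
Qed.

Lemma Rabs_le_of_sq_le x D y : 1 <= D -> 0 <= y -> x * x <= D * (y * y) -> Rabs x <= D * y.
Proof.
  intros HD Hy Hx.
  rewrite <- (Rabs_right (D * y)) by nra. apply Rsqr_le_abs_0. unfold Rsqr. nra.
Qed.

Lemma exp_le_one y : y <= 0 -> exp y <= 1.
Proof.
  intros Hy. rewrite <- exp_0. destruct (Req_dec y 0) as [->|]; [lra|].
  apply Rlt_le, exp_increasing; lra.
Qed.

(* [(x / 2) ^ m / m!] is one term of the series of [exp (x / 2)]. *)
Lemma exp_neg_half_mul_pow_le x m :
  0 <= x -> exp (- x / 2) * x ^ m <= 2 ^ m * INR (Factorial.fact m).
Proof.
  intros Hx.
  pose proof (INR_fact_lt_0 m) as Hfact.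
  assert (Hterm : (x / 2) ^ m / INR (Factorial.fact m) <= exp (x / 2)).
  { eapply Rle_trans; [| exact (exp_ge_taylor (x / 2) m ltac:(lra))].
    destruct m as [|m]; simpl; [lra|].
    enough (0 <= sum_f_R0 (fun i => (x / 2) ^ i / INR (Factorial.fact i)) m) by lra.
    apply cond_pos_sum. intros i. apply Rle_div_r; [apply INR_fact_lt_0|].
    rewrite Rmult_0_l. apply pow_le; lra. }
  assert (Hinv : exp (- x / 2) * exp (x / 2) = 1).
  { rewrite <- exp_plus. replace (- x / 2 + x / 2) with 0 by field. apply exp_0. }
  replace (x ^ m) with (2 ^ m * (x / 2) ^ m) by (rewrite <- Rpow_mult_distr; f_equal; field).
  apply Rmult_le_reg_r with (exp (x / 2) / INR (Factorial.fact m)).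
  { apply Rdiv_lt_0_compat; [apply exp_pos | exact Hfact]. }
  replace (exp (- x / 2) * (2 ^ m * (x / 2) ^ m) * (exp (x / 2) / INR (Factorial.fact m)))
    with (2 ^ m * ((x / 2) ^ m / INR (Factorial.fact m)) * (exp (- x / 2) * exp (x / 2)))
    by (field; lra).
  replace (2 ^ m * INR (Factorial.fact m) * (exp (x / 2) / INR (Factorial.fact m)))
    with (2 ^ m * exp (x / 2)) by (field; lra).
  rewrite Hinv, Rmult_1_r. apply Rmult_le_compat_l; [apply pow_le; lra | exact Hterm].
Qed.

Definition poly (c : nat -> R) (N : nat) (x : R) : R := sum_f_R0 (fun i => c i * x ^ i) N.
Definition coef_deriv (c : nat -> R) (i : nat) : R := INR (S i) * c (S i).
Definition coef_shift (c : nat -> R) (i : nat) : R := match i with O => 0 | S j => c j end.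

Lemma poly_is_derive c N x : is_derive (poly c (S N)) x (poly (coef_deriv c) N x).
Proof.
  induction N as [|N IH].
  - eapply is_derive_ext_eq;
      [| | exact (is_derive_Rplus _ _ x _ _ (is_derive_const (c O) x)
                  (is_derive_Rscal _ (c 1%nat) x _ (is_derive_Rpow_id 1 x)))].
    + intros t. unfold poly. simpl. ring.
    + change zero with 0. unfold poly, coef_deriv. simpl. ring.
  - eapply is_derive_ext_eq;
      [| | exact (is_derive_Rplus _ _ x _ _ IH
                  (is_derive_Rscal _ (c (S (S N))) x _ (is_derive_Rpow_id (S (S N)) x)))].
    + intros t. reflexivity.
    + unfold poly, coef_deriv. simpl. ring.
Qed.

Lemma poly_plus c d N x : poly (fun i => c i + d i) N x = poly c N x + poly d N x.
Proof. unfold poly. rewrite <- plus_sum. apply sum_eq. intros; ring. Qed.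

Lemma poly_scal a c N x : poly (fun i => a * c i) N x = a * poly c N x.
Proof. unfold poly. induction N as [|N IH]; simpl; [|rewrite IH]; ring. Qed.

Lemma Rmult_poly c N x : x * poly c N x = poly (coef_shift c) (S N) x.
Proof.
  unfold poly. induction N as [|N IH]; simpl in *; [|rewrite <- IH]; ring.
Qed.

Lemma poly_trailing_zeros c N m x :
  (forall i, (N < i)%nat -> c i = 0) -> poly c (N + m) x = poly c N x.
Proof.
  intros Hc. induction m as [|m IH]; [now rewrite Nat.add_0_r|].
  rewrite Nat.add_succ_r. unfold poly in *. simpl. rewrite IH, Hc by lia. ring.
Qed.

Lemma poly_null c N x : (forall i, c i = 0) -> poly c N x = 0.
Proof.
  intros Hc. unfold poly. induction N as [|N IH]; simpl; rewrite Hc; [|rewrite IH]; ring.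
Qed.

Lemma poly_S c N x : poly c (S N) x = c O + x * poly (fun i => c (S i)) N x.
Proof.
  induction N as [|N IH]; [unfold poly; simpl; ring|].
  change (poly c (S (S N)) x) with (poly c (S N) x + c (S (S N)) * x ^ S (S N)).
  change (poly (fun i => c (S i)) (S N) x)
    with (poly (fun i => c (S i)) N x + c (S (S N)) * x ^ S N).
  rewrite IH. simpl. ring.
Qed.

Lemma Rabs_poly_le_geometric d N x M q rho :
  0 <= x -> 0 <= q -> 0 <= rho < 1 -> q * x <= rho ->
  (forall i, Rabs (d i) <= M * q ^ i) -> Rabs (poly d N x) <= M / (1 - rho).
Proof.
  intros Hx Hq Hrho Hqx Hd.
  assert (HM : 0 <= M) by (specialize (Hd O); simpl in Hd; pose proof (Rabs_pos (d O)); lra).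
  assert (Hgeo : sum_f_R0 (fun i => M * rho ^ i) N = M * (1 - rho ^ S N) / (1 - rho)).
  { replace (M * (1 - rho ^ S N) / (1 - rho)) with (M * ((1 - rho ^ S N) / (1 - rho)))
      by (field; lra).
    rewrite <- tech3, scal_sum by lra. apply sum_eq. intros; ring. }
  unfold poly. eapply Rle_trans; [apply Rabs_triang_gen|].
  apply Rle_trans with (sum_f_R0 (fun i => M * rho ^ i) N).
  - apply sum_Rle. intros i _.
    rewrite Rabs_mult, (Rabs_right (x ^ i)) by (apply Rle_ge, pow_le; lra).
    apply Rle_trans with (M * q ^ i * x ^ i).
    + apply Rmult_le_compat_r; [apply pow_le; lra | apply Hd].
    + rewrite Rmult_assoc, <- Rpow_mult_distr. apply Rmult_le_compat_l; [exact HM|].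
      apply pow_incr. split; nra.
  - rewrite Hgeo. pose proof (pow_le rho (S N) (proj1 Hrho)).
    apply Rmult_le_compat_r; [apply Rlt_le, Rinv_0_lt_compat; lra | nra].
Qed.

Lemma exp_neg_half_poly_bounded d N :
  exists B, forall x, 0 <= x -> exp (- x / 2) * Rabs (poly d N x) <= B.
Proof.
  induction N as [|N [B HB]].
  - exists (Rabs (d O)). intros x Hx. unfold poly. simpl. rewrite Rmult_1_r.
    pose proof (exp_le_one (- x / 2) ltac:(lra)). pose proof (Rabs_pos (d O)). nra.
  - exists (B + Rabs (d (S N)) * (2 ^ S N * INR (Factorial.fact (S N)))).
    intros x Hx. change (poly d (S N) x) with (poly d N x + d (S N) * x ^ S N).
    specialize (HB x Hx). pose proof (exp_neg_half_mul_pow_le x (S N) Hx).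
    pose proof (exp_pos (- x / 2)). pose proof (Rabs_pos (d (S N))).
    pose proof (Rabs_triang (poly d N x) (d (S N) * x ^ S N)) as Htri.
    rewrite Rabs_mult, (Rabs_right (x ^ S N)) in Htri by (apply Rle_ge, pow_le; lra).
    apply Rle_trans
      with (exp (- x / 2) * Rabs (poly d N x) + Rabs (d (S N)) * (exp (- x / 2) * x ^ S N)).
    + apply Rle_trans
        with (exp (- x / 2) * (Rabs (poly d N x) + Rabs (d (S N)) * x ^ S N)); [|lra].
      apply Rmult_le_compat_l; lra.
    + apply Rplus_le_compat; [lra | apply Rmult_le_compat_l; lra].
Qed.

(** * Laguerre polynomials *)

Definition lag_coef (k : nat) (a : R) (i : nat) : R :=
  if Nat.leb i k then (-1) ^ i * lag_prod a i (k - i)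
        / (INR (Factorial.fact (k - i)) * INR (Factorial.fact i)) else 0.

Lemma lag_coef_gt k a i : (k < i)%nat -> lag_coef k a i = 0.
Proof. intros H. unfold lag_coef. destruct (Nat.leb_spec i k); [lia | reflexivity]. Qed.

Lemma laguerre_eq_poly k a m x : laguerre k a x = poly (lag_coef k a) (k + m) x.
Proof.
  rewrite poly_trailing_zeros by (intros; apply lag_coef_gt; lia).
  unfold laguerre, poly. apply sum_eq. intros i Hi. unfold lag_coef.
  destruct (Nat.leb_spec i k); [reflexivity | lia].
Qed.

Lemma lag_prod_S a i m : lag_prod a i (S m) = (a + INR (S i)) * lag_prod a (S i) m.
Proof.
  revert i. induction m as [|m IH]; intros i.
  - simpl lag_prod. rewrite Nat.add_1_r. ring.
  - change (lag_prod a i (S (S m))) with ((a + INR (i + S (S m))) * lag_prod a i (S m)).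
    change (lag_prod a (S i) (S m)) with ((a + INR (S i + S m)) * lag_prod a (S i) m).
    rewrite IH. replace (i + S (S m))%nat with (S i + S m)%nat by lia. ring.
Qed.

Lemma lag_coef_rec k a i :
  INR (S i) * (a + INR (S i)) * lag_coef k a (S i) + (INR k - INR i) * lag_coef k a i = 0.
Proof.
  destruct (Nat.lt_ge_cases i k) as [Hik|Hik].
  - unfold lag_coef.
    destruct (Nat.leb_spec (S i) k); [|lia]. destruct (Nat.leb_spec i k); [|lia].
    replace (k - i)%nat with (S (k - S i)) by lia.
    rewrite lag_prod_S.
    change (Factorial.fact (S (k - S i))) with (S (k - S i) * Factorial.fact (k - S i))%nat.
    change (Factorial.fact (S i)) with (S i * Factorial.fact i)%nat.
    rewrite !mult_INR.
    assert (Hki : INR (S (k - S i)) = INR k - INR i).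
    { rewrite S_INR, minus_INR, S_INR by lia. ring. }
    rewrite Hki. simpl pow.
    pose proof (INR_fact_lt_0 (k - S i)). pose proof (INR_fact_lt_0 i).
    assert (INR k - INR i <> 0) by (rewrite <- Hki; apply not_0_INR; lia).
    assert (INR (S i) <> 0) by (apply not_0_INR; lia).
    field. repeat split; lra.
  - rewrite (lag_coef_gt k a (S i)) by lia.
    destruct (Nat.eq_dec i k) as [->|]; [|rewrite lag_coef_gt by lia]; ring.
Qed.

Section LaguerreODE.
Variables (k : nat) (a : R).

Definition lagP (x : R) : R := poly (lag_coef k a) (S (S k)) x.
Definition lagP1 (x : R) : R := poly (coef_deriv (lag_coef k a)) (S k) x.
Definition lagP2 (x : R) : R := poly (coef_deriv (coef_deriv (lag_coef k a))) k x.

Lemma lagP_is_derive x : is_derive lagP x (lagP1 x).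
Proof. apply poly_is_derive. Qed.

Lemma lagP1_is_derive x : is_derive lagP1 x (lagP2 x).
Proof. apply poly_is_derive. Qed.

Lemma lagP_eq x : lagP x = laguerre k a x.
Proof. rewrite (laguerre_eq_poly k a 2). unfold lagP. f_equal. lia. Qed.

(* All three terms are written as polynomials of degree [k + 2]; the coefficient
   of [x ^ i] of their sum is [lag_coef_rec] at [i]. *)
Lemma laguerre_ode x : x * lagP2 x + (a + 1 - x) * lagP1 x + INR k * lagP x = 0.
Proof.
  set (c := lag_coef k a).
  assert (Hc : forall i, (k < i)%nat -> c i = 0) by (intros; apply lag_coef_gt; lia).
  unfold lagP, lagP1, lagP2. fold c.
  rewrite Rmult_poly.
  replace ((a + 1 - x) * poly (coef_deriv c) (S k) x)
    with ((a + 1) * poly (coef_deriv c) (S (S k)) x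
          + (-1) * poly (coef_shift (coef_deriv c)) (S (S k)) x).
  2:{ rewrite <- Rmult_poly. replace (S (S k)) with (S k + 1)%nat by lia.
      rewrite poly_trailing_zeros; [ring|].
      intros i Hi. unfold coef_deriv. rewrite Hc by lia. ring. }
  replace (poly (coef_shift (coef_deriv (coef_deriv c))) (S k) x)
    with (poly (coef_shift (coef_deriv (coef_deriv c))) (S (S k)) x).
  2:{ replace (S (S k)) with (S k + 1)%nat by lia. apply poly_trailing_zeros.
      intros [|i] Hi; [lia|]. simpl. unfold coef_deriv. rewrite Hc by lia. ring. }
  rewrite <- !poly_scal, <- !poly_plus.
  apply poly_null. intros [|i]; simpl; unfold coef_deriv.
  - pose proof (lag_coef_rec k a 0). simpl in *. fold c in H. lra.
  - pose proof (lag_coef_rec k a (S i)). fold c in H.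
    replace (INR (S (S i))) with (INR i + 1 + 1) in * by (rewrite !S_INR; ring).
    rewrite S_INR in *. lra.
Qed.

End LaguerreODE.

Lemma lag_prod_0_pos a m : -1/2 <= a -> 0 < lag_prod a 0 m.
Proof.
  intros Ha. induction m as [|m IH]; [simpl; lra|].
  change (lag_prod a 0 (S m)) with ((a + INR (S m)) * lag_prod a 0 m).
  apply Rmult_lt_0_compat; [|exact IH].
  rewrite S_INR. pose proof (pos_INR m). lra.
Qed.

Lemma lag_coef_0_pos k a : -1/2 <= a -> 0 < lag_coef k a 0.
Proof.
  intros Ha. unfold lag_coef. simpl Nat.leb. rewrite Nat.sub_0_r. simpl.
  pose proof (lag_prod_0_pos a k Ha). pose proof (INR_fact_lt_0 k).
  apply Rmult_lt_0_compat; [lra|]. apply Rinv_0_lt_compat. nra.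
Qed.

(* From the recurrence, since [(i + 1) (a + i + 1) >= 1/2] and [0 <= k - i <= k + 1]. *)
Lemma Rabs_lag_coef_le k a i : -1/2 <= a ->
  Rabs (lag_coef k a i) <= lag_coef k a 0 * (2 * (INR k + 1)) ^ i.
Proof.
  intros Ha. pose proof (lag_coef_0_pos k a Ha). pose proof (pos_INR k).
  induction i as [|i IH]; [simpl; rewrite Rabs_right; lra|].
  destruct (Nat.lt_ge_cases i k) as [Hik|Hik].
  2:{ rewrite lag_coef_gt, Rabs_R0 by lia.
      apply Rmult_le_pos; [lra | apply pow_le; lra]. }
  pose proof (lag_coef_rec k a i) as Hrec.
  set (d := INR (S i) * (a + INR (S i))) in Hrec.
  assert (Hd : 1/2 <= d) by (unfold d; rewrite S_INR; pose proof (pos_INR i); nra).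
  assert (Hki : 0 <= INR k - INR i <= INR k + 1).
  { pose proof (pos_INR i). pose proof (le_INR i k ltac:(lia)). lra. }
  assert (Habs : d * Rabs (lag_coef k a (S i)) = (INR k - INR i) * Rabs (lag_coef k a i)).
  { rewrite <- (Rabs_right d), <- (Rabs_right (INR k - INR i)), <- !Rabs_mult by lra.
    rewrite <- Rabs_Ropp. f_equal. lra. }
  simpl pow.
  pose proof (Rabs_pos (lag_coef k a (S i))). pose proof (Rabs_pos (lag_coef k a i)).
  pose proof (pow_le (2 * (INR k + 1)) i ltac:(lra)).
  assert (1/2 * Rabs (lag_coef k a (S i)) <= d * Rabs (lag_coef k a (S i)))
    by (apply Rmult_le_compat_r; lra).
  assert ((INR k - INR i) * Rabs (lag_coef k a i)
          <= (INR k + 1) * (lag_coef k a 0 * (2 * (INR k + 1)) ^ i))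
    by (apply Rmult_le_compat; lra).
  lra.
Qed.

Lemma INR_plus_1_ge_1 k : 1 <= INR k + 1.
Proof. pose proof (pos_INR k). lra. Qed.

Section NearZero.
Variables (k : nat) (a : R).
Hypothesis Ha : -1/2 <= a.
Let c0 : R := lag_coef k a 0.
Let K : R := INR k + 1.

Lemma lagP_near_0 x : 0 <= x -> 2 * K * x <= 1/3 -> Rabs (lagP k a x - c0) <= c0 / 2.
Proof.
  intros Hx Hsmall. pose proof (INR_plus_1_ge_1 k) as HK. fold K in HK.
  pose proof (lag_coef_0_pos k a Ha) as Hc0. fold c0 in Hc0.
  unfold lagP. rewrite poly_S.
  replace (lag_coef k a 0 + x * poly (fun i => lag_coef k a (S i)) (S k) x - c0)
    with (x * poly (fun i => lag_coef k a (S i)) (S k) x) by (unfold c0; ring).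
  rewrite Rabs_mult, Rabs_right by lra.
  assert (Hp : Rabs (poly (fun i => lag_coef k a (S i)) (S k) x) <= c0 * (2 * K) / (1 - 1/3)).
  { apply Rabs_poly_le_geometric with (q := 2 * K); try lra.
    intros i. pose proof (Rabs_lag_coef_le k a (S i) Ha) as Hcoef. simpl pow in Hcoef.
    fold K c0 in Hcoef. lra. }
  apply Rle_trans with (x * (c0 * (2 * K) / (1 - 1/3))); [apply Rmult_le_compat_l; lra|].
  replace (x * (c0 * (2 * K) / (1 - 1/3))) with (2 * K * x * c0 * (3/2)) by field.
  nra.
Qed.

Lemma Rabs_lagP1_near_0 x : 0 <= x -> 2 * K * x <= 1/3 -> Rabs (lagP1 k a x) <= 6 * K * c0.
Proof.
  intros Hx Hsmall. pose proof (INR_plus_1_ge_1 k) as HK. fold K in HK.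
  pose proof (lag_coef_0_pos k a Ha) as Hc0. fold c0 in Hc0.
  replace (6 * K * c0) with (2 * K * c0 / (1 - 2/3)) by field.
  apply Rabs_poly_le_geometric with (q := 4 * K); try lra.
  intros i. unfold coef_deriv. rewrite Rabs_mult, Rabs_right by (apply Rle_ge, pos_INR).
  pose proof (Rabs_lag_coef_le k a (S i) Ha) as Hcoef. fold K c0 in Hcoef. simpl pow in Hcoef.
  pose proof (INR_S_le_pow2 i). pose proof (pos_INR (S i)).
  pose proof (pow_le (2 * K) i ltac:(lra)). pose proof (pow_le 2 i ltac:(lra)).
  pose proof (Rabs_pos (lag_coef k a (S i))).
  replace ((4 * K) ^ i) with (2 ^ i * (2 * K) ^ i) by (rewrite <- Rpow_mult_distr; f_equal; ring).
  apply Rle_trans with (INR (S i) * (c0 * (2 * K * (2 * K) ^ i))); [apply Rmult_le_compat_l; lra|].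
  apply Rle_trans with (2 ^ i * (c0 * (2 * K * (2 * K) ^ i))); [|right; ring].
  apply Rmult_le_compat_r; [|lra]. apply Rmult_le_pos; [lra|]. apply Rmult_le_pos; lra.
Qed.

End NearZero.

(** * An energy estimate for [u'' = - (E t^(2n) - t^(4n+2)) u] *)

Definition pot (n : nat) (E t : R) : R := E * t ^ (2*n) - t ^ (4*n+2).
Definition dpot (n : nat) (E t : R) : R :=
  E * (INR (2*n) * t ^ pred (2*n)) - INR (4*n+2) * t ^ pred (4*n+2).

Lemma pot_is_derive n E t : is_derive (pot n E) t (dpot n E t).
Proof.
  unfold pot, dpot.
  eapply is_derive_ext_eq;
    [| | exact (is_derive_Rplus _ _ t _ _ (is_derive_Rscal _ E t _ (is_derive_Rpow_id (2*n) t))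
                  (is_derive_Rscal _ (-1) t _ (is_derive_Rpow_id (4*n+2) t)))];
    intros; cbv beta; ring.
Qed.

Lemma pow_2n2 n t : t ^ (2*n+2) = t ^ (2*n) * t * t.
Proof. replace (2*n+2)%nat with (S (S (2*n))) by lia. simpl. ring. Qed.

Lemma pot_eq n E t : pot n E t = t ^ (2*n) * (E - t ^ (2*n+2)).
Proof.
  unfold pot. rewrite pow_2n2. replace (4*n+2)%nat with (2*n + (2*n+2))%nat by lia.
  rewrite pow_add, pow_2n2. ring.
Qed.

Lemma Rmult_dpot n E t :
  t * dpot n E t = 2 * t ^ (2*n) * (INR n * E - (2 * INR n + 1) * t ^ (2*n+2)).
Proof.
  unfold dpot. rewrite pow_2n2.
  replace (pred (4*n+2)) with (S (2*n + 2*n)) by lia. rewrite <- tech_pow_Rmult, pow_add.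
  rewrite !plus_INR, !mult_INR. simpl (INR 2). simpl (INR 4).
  destruct n as [|m]; [simpl; ring|].
  assert (Hp : t * t ^ pred (2 * S m) = t ^ (2 * S m))
    by (replace (2 * S m)%nat with (S (pred (2 * S m))) at 2 by lia; reflexivity).
  rewrite <- Hp. ring.
Qed.

Lemma pot_pos n E t : 0 < t -> t ^ (2*n+2) < E -> 0 < pot n E t.
Proof. intros Ht HtE. rewrite pot_eq. apply Rmult_lt_0_compat; [apply pow_lt|]; lra. Qed.

Lemma pot_le n E t : 1 <= E -> 0 <= t -> t ^ (2*n+2) <= E -> pot n E t <= 2 * E ^ 2.
Proof.
  intros HE Ht HtE. rewrite pot_eq.
  pose proof (pow_le_one_plus_pow t (2*n) (2*n+2) Ht ltac:(lia)).
  pose proof (pow_le t (2*n) Ht). pose proof (pow_le t (2*n+2) Ht).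
  apply Rle_trans with (t ^ (2*n) * E); [apply Rmult_le_compat_l|]; nra.
Qed.

Section Energy.
Variables (n : nat) (E : R) (u u1 : R -> R).
Hypothesis HE : 1 <= E.
Hypothesis Hu : forall t : R, is_derive u t (u1 t).
Hypothesis Hu1 : forall t : R, is_derive u1 t (- pot n E t * u t).

Definition energy (t : R) : R := u1 t * u1 t + pot n E t * (u t * u t).
Definition scaled_energy (t : R) : R := energy t / pot n E t.

Lemma energy_is_derive t : is_derive energy t (dpot n E t * (u t * u t)).
Proof.
  eapply is_derive_ext_eq;
    [| | exact (is_derive_Rplus _ _ t _ _ (is_derive_Rmult _ _ t _ _ (Hu1 t) (Hu1 t))
        (is_derive_Rmult _ _ t _ _ (pot_is_derive n E t) (is_derive_Rmult _ _ t _ _ (Hu t) (Hu t))))].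
  - reflexivity.
  - cbv beta. ring.
Qed.

Lemma scaled_energy_is_derive t : pot n E t <> 0 ->
  is_derive scaled_energy t (- dpot n E t * (u1 t * u1 t) / pot n E t ^ 2).
Proof.
  intros Hpot.
  eapply is_derive_ext_eq;
    [| | exact (is_derive_div _ _ t _ _ (energy_is_derive t) (pot_is_derive n E t) Hpot)].
  - reflexivity.
  - unfold energy. field. exact Hpot.
Qed.

Let turning (t : R) : Prop := (2 * INR n + 1) * t ^ (2*n+2) <= INR n * E.

Lemma turning_lt_E t : turning t -> t ^ (2*n+2) < E.
Proof. unfold turning. intros H. pose proof (pos_INR n). nra. Qed.

Lemma scaled_energy_nonincreasing s t : 0 < s <= t -> turning t ->
  scaled_energy t <= scaled_energy s.
Proof.
  intros Hst Ht.
  assert (Hx : forall x, s <= x <= t -> 0 < pot n E x /\ 0 <= dpot n E x).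
  { intros x Hx. pose proof (pow_incr x t (2*n+2) ltac:(lra)).
    assert (Hturn : turning x) by (unfold turning in *; pose proof (pos_INR n); nra).
    split; [apply pot_pos; [lra | apply turning_lt_E; assumption]|].
    pose proof (pow_lt x (2*n) ltac:(lra)). unfold turning in Hturn.
    assert (0 <= x * dpot n E x) by (rewrite Rmult_dpot; apply Rmult_le_pos; nra).
    apply Rmult_le_reg_l with x; lra. }
  apply (ge_of_is_derive_nonpos scaled_energy
           (fun x => - dpot n E x * (u1 x * u1 x) / pot n E x ^ 2)); [lra| |].
  - intros x Hxx. apply scaled_energy_is_derive. destruct (Hx x Hxx); lra.
  - intros x Hxx. destruct (Hx x Hxx). unfold Rdiv.
    pose proof (Rinv_0_lt_compat _ (pow_lt (pot n E x) 2 ltac:(lra))).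
    assert (0 <= dpot n E x * (u1 x * u1 x)) by (apply Rmult_le_pos; nra). nra.
Qed.

Lemma energy_nonincreasing s t : 0 < s <= t ->
  INR n * E <= (2 * INR n + 1) * s ^ (2*n+2) -> energy t <= energy s.
Proof.
  intros Hst Hs.
  apply (ge_of_is_derive_nonpos energy (fun x => dpot n E x * (u x * u x))); [lra| |].
  - intros x _. apply energy_is_derive.
  - intros x Hx. pose proof (pow_incr s x (2*n+2) ltac:(lra)).
    pose proof (pos_INR n). pose proof (pow_lt x (2*n) ltac:(lra)).
    assert (INR n * E - (2 * INR n + 1) * x ^ (2*n+2) <= 0) by nra.
    assert (x * dpot n E x <= 0) by (rewrite Rmult_dpot; nra).
    assert (dpot n E x <= 0) by (apply Rmult_le_reg_l with x; lra).
    nra.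
Qed.

Lemma energy_le_scaled t s : 0 < t -> t ^ (2*n+2) < E ->
  scaled_energy t <= scaled_energy s -> 0 <= scaled_energy s ->
  energy t <= 2 * E ^ 2 * scaled_energy s.
Proof.
  intros Ht HtE Hts Hs. pose proof (pot_pos n E t Ht HtE).
  replace (energy t) with (pot n E t * scaled_energy t) by (unfold scaled_energy; field; lra).
  pose proof (pot_le n E t HE ltac:(lra) ltac:(lra)).
  apply Rle_trans with (pot n E t * scaled_energy s); [apply Rmult_le_compat_l|]; nra.
Qed.

Lemma energy_le s t : 0 < s <= t -> s ^ (2*n+2) < E -> 0 <= scaled_energy s ->
  energy t <= 2 * E ^ 2 * scaled_energy s.
Proof.
  intros Hst HsE Hs. pose proof (pos_INR n).
  pose proof (pow_incr s t (2*n+2) ltac:(lra)).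
  destruct (Rle_or_lt ((2 * INR n + 1) * t ^ (2*n+2)) (INR n * E)) as [Ht|Ht].
  - apply energy_le_scaled; [lra | apply turning_lt_E; exact Ht | |exact Hs].
    apply scaled_energy_nonincreasing; [lra|exact Ht].
  - destruct (Rle_or_lt (INR n * E) ((2 * INR n + 1) * s ^ (2*n+2))) as [Hs'|Hs'].
    + apply Rle_trans with (energy s); [apply energy_nonincreasing; lra|].
      apply energy_le_scaled; lra.
    + (* the turning point [t1] of [pot] lies in [(s, t)] *)
      assert (Hy : 0 < INR n * E / (2 * INR n + 1)).
      { pose proof (pow_le s (2*n+2) ltac:(lra)). apply Rdiv_lt_0_compat; nra. }
      set (t1 := Rpower (INR n * E / (2 * INR n + 1)) (/ INR (2*n+2))).
      assert (Ht1 : (2 * INR n + 1) * t1 ^ (2*n+2) = INR n * E).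
      { unfold t1. rewrite pow_Rpower_inv by (lia || lra). field. lra. }
      assert (Ht1p : 0 < t1) by apply exp_pos.
      assert (s < t1) by (apply pow_lt_reg with (2*n+2)%nat; nra).
      assert (t1 < t) by (apply pow_lt_reg with (2*n+2)%nat; nra).
      apply Rle_trans with (energy t1); [apply energy_nonincreasing; lra|].
      apply energy_le_scaled; [lra | apply turning_lt_E; unfold turning; lra | | exact Hs].
      apply scaled_energy_nonincreasing; [lra | unfold turning; lra].
Qed.

(* Past the turning point [pot <= 0] and [u] stays bounded, so [u u1] cannot become
   positive: otherwise [(u u1)' = u1^2 - pot u^2 >= 0] would make [u^2] grow linearly. *)
Lemma u_mul_u1_nonpos T : (forall tau, T <= tau -> pot n E tau <= 0) ->
  (exists B, forall t, T <= t -> Rabs (u t) <= B) ->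
  forall t, T <= t -> u t * u1 t <= 0.
Proof.
  intros Hpot [B HB] t0 Ht0.
  destruct (Rle_or_lt (u t0 * u1 t0) 0) as [|Hd]; [assumption|exfalso].
  set (d := u t0 * u1 t0) in *.
  assert (Hgrow : forall tau, t0 <= tau -> d <= u tau * u1 tau).
  { intros tau Htau.
    apply (le_of_is_derive_nonneg (fun x => u x * u1 x)
             (fun x => u1 x * u1 x + u x * (- pot n E x * u x))); [lra| |].
    - intros x _. apply (is_derive_Rmult _ _ x _ _ (Hu x) (Hu1 x)).
    - intros x Hx. specialize (Hpot x ltac:(lra)). nra. }
  assert (Hsq : forall tau, t0 <= tau -> u t0 * u t0 + 2 * d * (tau - t0) <= u tau * u tau).
  { intros tau Htau.
    enough (u t0 * u t0 - 2 * d * t0 <= u tau * u tau - 2 * d * tau) by lra.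
    apply (le_of_is_derive_nonneg (fun x => u x * u x - 2 * d * x)
             (fun x => u1 x * u x + u x * u1 x - 2 * d)); [lra| |].
    - intros x _.
      eapply is_derive_ext_eq; [| | exact (is_derive_Rplus _ _ x _ _
          (is_derive_Rmult _ _ x _ _ (Hu x) (Hu x)) (is_derive_Rscal _ (- (2 * d)) x _ (is_derive_id x)))].
      + intros; cbv beta; ring.
      + change one with 1. ring.
    - intros x Hx. specialize (Hgrow x ltac:(lra)). lra. }
  assert (HB0 : 0 <= B) by (specialize (HB t0 Ht0); pose proof (Rabs_pos (u t0)); lra).
  set (tau := t0 + (B * B + 1) / (2 * d)).
  assert (Htau : t0 <= tau).
  { unfold tau. pose proof (Rdiv_lt_0_compat (B * B + 1) (2 * d) ltac:(nra) ltac:(lra)). lra. }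
  specialize (Hsq tau Htau). specialize (HB tau ltac:(lra)).
  assert (2 * d * (tau - t0) = B * B + 1) by (unfold tau; field; lra).
  pose proof (sq_le_of_Rabs_le (u tau) B HB). nra.
Qed.

Lemma u1_sq_nonincreasing T : (forall tau, T <= tau -> pot n E tau <= 0) ->
  (exists B, forall t, T <= t -> Rabs (u t) <= B) ->
  forall t, T <= t -> u1 t * u1 t <= u1 T * u1 T.
Proof.
  intros Hpot Hb t Ht.
  apply (ge_of_is_derive_nonpos (fun x => u1 x * u1 x)
           (fun x => (- pot n E x * u x) * u1 x + u1 x * (- pot n E x * u x))); [lra| |].
  - intros x _. apply (is_derive_Rmult _ _ x _ _ (Hu1 x) (Hu1 x)).
  - intros x Hx. pose proof (Hpot x ltac:(lra)). pose proof (u_mul_u1_nonpos T Hpot Hb x ltac:(lra)).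
    nra.
Qed.

Lemma u1_sq_le s : 0 < s -> s ^ (2*n+2) <= 1/3 ->
  (exists B, forall t, 0 <= t -> Rabs (u t) <= B) ->
  forall t, s <= t -> u1 t * u1 t <= 2 * E ^ 2 * (u1 s * u1 s / pot n E s + u s * u s).
Proof.
  intros Hs Hs3 [B HB].
  assert (HPs : 0 < pot n E s) by (apply pot_pos; lra).
  replace (u1 s * u1 s / pot n E s + u s * u s) with (scaled_energy s)
    by (unfold scaled_energy, energy; field; lra).
  assert (HGs : 0 <= scaled_energy s).
  { unfold scaled_energy. apply Rle_div_r; [exact HPs|]. unfold energy. nra. }
  intros t Ht.
  destruct (Rle_or_lt 0 (pot n E t)) as [HP|HP].
  - pose proof (energy_le s t ltac:(lra) ltac:(lra) HGs). unfold energy in H. nra.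
  - (* beyond the zero [T] of [pot], [u1 ^ 2] decreases *)
    set (T := Rpower E (/ INR (2*n+2))).
    assert (HT : T ^ (2*n+2) = E) by (apply pow_Rpower_inv; [lra|lia]).
    assert (HTp : 0 < T) by apply exp_pos.
    assert (HsT : s < T) by (apply pow_lt_reg with (2*n+2)%nat; lra).
    assert (HtT : T <= t).
    { destruct (Rle_or_lt T t) as [|HtT]; [assumption|].
      pose proof (pow_incr t T (2*n+2) ltac:(lra)).
      rewrite pot_eq in HP. pose proof (pow_le t (2*n) ltac:(lra)). nra. }
    assert (Hpot : forall tau, T <= tau -> pot n E tau <= 0).
    { intros tau Htau. rewrite pot_eq. pose proof (pow_incr T tau (2*n+2) ltac:(lra)).
      pose proof (pow_le tau (2*n) ltac:(lra)). nra. }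
    assert (Hb : exists B, forall t, T <= t -> Rabs (u t) <= B)
      by (exists B; intros; apply HB; lra).
    apply Rle_trans with (u1 T * u1 T); [exact (u1_sq_nonincreasing T Hpot Hb t HtT)|].
    pose proof (energy_le s T ltac:(lra) ltac:(lra) HGs).
    unfold energy in H. rewrite pot_eq, HT in H. lra.
Qed.

End Energy.

(** * The profiles [v0] and [w0] solve the energy equation *)

Definition Xn (n : nat) (t : R) : R := t ^ (2*n+2) / INR (n+1).

Definition lag_exp (k : nat) (a x : R) : R := exp (- x / 2) * lagP k a x.
Definition lag_exp1 (k : nat) (a x : R) : R := exp (- x / 2) * (lagP1 k a x - lagP k a x / 2).
Definition lag_exp2 (k : nat) (a x : R) : R :=
  exp (- x / 2) * (lagP2 k a x - lagP1 k a x + lagP k a x / 4).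

(* With [a = lag_param n j], [prof] is [v0] for [j = 0] and [w0] for [j = 1]. *)
Definition lag_param (n j : nat) : R := (2 * INR j - 1) / INR (2*n+2).
Definition prof (n k : nat) (a : R) (j : nat) (t : R) : R := t ^ j * lag_exp k a (Xn n t).
Definition prof1 (n k : nat) (a : R) (j : nat) (t : R) : R :=
  INR j * t ^ pred j * lag_exp k a (Xn n t) + 2 * t ^ (2*n+1+j) * lag_exp1 k a (Xn n t).

Lemma INR_plus_1_pos n : 0 < INR (n+1).
Proof. apply lt_0_INR. lia. Qed.

Lemma INR_2n2 n : INR (2*n+2) = 2 * INR (n+1).
Proof. rewrite !plus_INR, mult_INR. simpl. ring. Qed.

Lemma Xn_nonneg n t : 0 <= Xn n t.
Proof.
  unfold Xn. apply Rle_div_r; [apply INR_plus_1_pos|]. rewrite Rmult_0_l.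
  replace (2*n+2)%nat with (2*(n+1))%nat by lia. rewrite pow_mult. apply pow_le, pow2_ge_0.
Qed.

Lemma Xn_opp n t : Xn n (- t) = Xn n t.
Proof. unfold Xn. replace (2*n+2)%nat with (2*(n+1))%nat by lia. now rewrite pow_even_opp. Qed.

Lemma Xn_is_derive n (t : R) : is_derive (Xn n) t (2 * t ^ (2*n+1)).
Proof.
  pose proof (INR_plus_1_pos n).
  eapply is_derive_ext_eq;
    [| | exact (is_derive_Rscal _ (/ INR (n+1)) t _ (is_derive_Rpow_id (2*n+2) t))].
  - intros. unfold Xn. field. lra.
  - replace (pred (2*n+2)) with (2*n+1)%nat by lia. rewrite INR_2n2. field. lra.
Qed.

Section Profiles.
Variables (n k : nat) (a : R).

Lemma lag_exp_ode x :
  x * lag_exp2 k a x + (a + 1) * lag_exp1 k a x + (INR k + (a + 1) / 2 - x / 4) * lag_exp k a x = 0.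
Proof.
  unfold lag_exp, lag_exp1, lag_exp2.
  replace (x * (exp (- x / 2) * (lagP2 k a x - lagP1 k a x + lagP k a x / 4)) +
           (a + 1) * (exp (- x / 2) * (lagP1 k a x - lagP k a x / 2)) +
           (INR k + (a + 1) / 2 - x / 4) * (exp (- x / 2) * lagP k a x))
    with (exp (- x / 2) * (x * lagP2 k a x + (a + 1 - x) * lagP1 k a x + INR k * lagP k a x))
    by field.
  rewrite laguerre_ode. ring.
Qed.

Lemma lag_exp_is_derive (x : R) : is_derive (lag_exp k a) x (lag_exp1 k a x).
Proof.
  eapply is_derive_ext_eq; [| |
    exact (is_derive_Rmult _ _ x _ _
             (is_derive_Rexp _ x _ (is_derive_Rscal _ (- / 2) x _ (is_derive_id x)))
             (lagP_is_derive k a x))].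
  - intros. unfold lag_exp. cbv beta. f_equal. f_equal. field.
  - unfold lag_exp1. change one with 1. replace (- x / 2) with (- / 2 * x) by field. field.
Qed.

Lemma lag_exp1_is_derive (x : R) : is_derive (lag_exp1 k a) x (lag_exp2 k a x).
Proof.
  eapply is_derive_ext_eq; [| |
    exact (is_derive_Rmult _ _ x _ _
             (is_derive_Rexp _ x _ (is_derive_Rscal _ (- / 2) x _ (is_derive_id x)))
             (is_derive_Rplus _ _ x _ _ (lagP1_is_derive k a x)
                (is_derive_Rscal _ (- / 2) x _ (lagP_is_derive k a x))))].
  - intros. unfold lag_exp1. cbv beta. replace (- t / 2) with (- / 2 * t) by field. field.
  - unfold lag_exp2. change one with 1. replace (- x / 2) with (- / 2 * x) by field. field.
Qed.

Lemma lag_exp_Xn_is_derive (t : R) :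
  is_derive (fun t => lag_exp k a (Xn n t)) t (2 * t ^ (2*n+1) * lag_exp1 k a (Xn n t)).
Proof. exact (is_derive_Rcomp _ _ t _ _ (lag_exp_is_derive (Xn n t)) (Xn_is_derive n t)). Qed.

Lemma lag_exp1_Xn_is_derive (t : R) :
  is_derive (fun t => lag_exp1 k a (Xn n t)) t (2 * t ^ (2*n+1) * lag_exp2 k a (Xn n t)).
Proof. exact (is_derive_Rcomp _ _ t _ _ (lag_exp1_is_derive (Xn n t)) (Xn_is_derive n t)). Qed.

Lemma prof_is_derive j (t : R) : is_derive (prof n k a j) t (prof1 n k a j t).
Proof.
  eapply is_derive_ext_eq;
    [| | exact (is_derive_Rmult _ _ t _ _ (is_derive_Rpow_id j t) (lag_exp_Xn_is_derive t))].
  - reflexivity.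
  - unfold prof1. replace (2*n+1+j)%nat with (j + (2*n+1))%nat by lia. rewrite (pow_add t j). ring.
Qed.

Lemma Rabs_prof1_opp j t : (j <= 1)%nat -> Rabs (prof1 n k a j (- t)) = Rabs (prof1 n k a j t).
Proof.
  intros Hj. unfold prof1. rewrite Xn_opp.
  destruct j as [|[|]]; [| |lia]; simpl pred; rewrite !pow_O.
  - replace (2*n+1+0)%nat with (S (2*n)) by lia. rewrite <- !tech_pow_Rmult, pow_even_opp.
    rewrite <- Rabs_Ropp. f_equal. simpl INR. ring.
  - replace (2*n+1+1)%nat with (2*(n+1))%nat by lia. now rewrite pow_even_opp.
Qed.

End Profiles.

Lemma Ek_eq n k : Ek n k = 4 * INR k * INR (n+1) + 2 * INR (n+1) - 1.
Proof. unfold Ek. rewrite !plus_INR, !mult_INR, !plus_INR. simpl. ring. Qed.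

Lemma pow_2n1 n t : t ^ (2*n+1) = t ^ (2*n) * t.
Proof. replace (2*n+1)%nat with (S (2*n)) by lia. simpl. ring. Qed.

Lemma pow_4n2 n t : t ^ (4*n+2) = t ^ (2*n) * (t ^ (2*n) * t * t).
Proof. replace (4*n+2)%nat with (2*n + (2*n+2))%nat by lia. now rewrite pow_add, pow_2n2. Qed.

Lemma Xn_eq n t : Xn n t = t ^ (2*n) * t * t / INR (n+1).
Proof. unfold Xn. now rewrite pow_2n2. Qed.

(* After substituting [X = Xn t], each equation below is [4 (n+1) t^(2n+j)] times
   [lag_exp_ode] at [X]. *)
Lemma prof1_0_is_derive n k (t : R) :
  is_derive (prof1 n k (lag_param n 0) 0) t (- pot n (Ek n k) t * prof n k (lag_param n 0) 0 t).
Proof.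
  set (a := lag_param n 0). pose proof (INR_plus_1_pos n).
  pose proof (lag_exp_ode k a (Xn n t)) as Hode.
  eapply is_derive_ext_eq; [| |
    exact (is_derive_Rmult _ _ t _ _
             (is_derive_Rscal _ 2 t _ (is_derive_Rpow_id (2*n+1) t)) (lag_exp1_Xn_is_derive n k a t))].
  - intros. unfold prof1. change (INR 0) with 0. rewrite Nat.add_0_r. ring.
  - unfold prof, pot. replace (pred (2*n+1)) with (2*n)%nat by lia. rewrite pow_O.
    set (f0 := lag_exp k a (Xn n t)) in *. set (f1 := lag_exp1 k a (Xn n t)) in *.
    set (f2 := lag_exp2 k a (Xn n t)) in *.
    assert (Ha : a = - / (2 * INR (n+1))) by (unfold a, lag_param; rewrite INR_2n2; simpl; field; lra).
    rewrite Xn_eq, Ha in Hode. rewrite pow_2n1, pow_4n2, Ek_eq in *.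
    replace (INR (2*n+1)) with (2 * INR (n+1) - 1) by (rewrite !plus_INR, mult_INR; simpl; ring).
    set (p := t ^ (2*n)) in *.
    match goal with |- ?L = ?R => match type of Hode with ?e = 0 =>
      assert (Hdiff : L - R = 4 * INR (n+1) * p * e) by (field; lra) end end.
    rewrite Hode, Rmult_0_r in Hdiff. lra.
Qed.

Lemma prof1_1_is_derive n k (t : R) :
  is_derive (prof1 n k (lag_param n 1) 1) t
    (- pot n (Ek n k + 2) t * prof n k (lag_param n 1) 1 t).
Proof.
  set (a := lag_param n 1). pose proof (INR_plus_1_pos n).
  pose proof (lag_exp_ode k a (Xn n t)) as Hode.
  eapply is_derive_ext_eq; [| |
    exact (is_derive_Rplus _ _ t _ _ (lag_exp_Xn_is_derive n k a t)
             (is_derive_Rmult _ _ t _ _ (is_derive_Rscal _ 2 t _ (is_derive_Rpow_id (2*n+2) t))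
                (lag_exp1_Xn_is_derive n k a t)))].
  - intros. unfold prof1. change (INR 1) with 1. simpl pred. rewrite pow_O.
    replace (2*n+1+1)%nat with (2*n+2)%nat by lia. ring.
  - unfold prof, pot. replace (pred (2*n+2)) with (2*n+1)%nat by lia. rewrite INR_2n2, pow_1.
    set (f0 := lag_exp k a (Xn n t)) in *. set (f1 := lag_exp1 k a (Xn n t)) in *.
    set (f2 := lag_exp2 k a (Xn n t)) in *.
    assert (Ha : a = / (2 * INR (n+1))) by (unfold a, lag_param; rewrite INR_2n2; simpl; field; lra).
    rewrite Xn_eq, Ha in Hode. rewrite pow_2n2, pow_2n1, pow_4n2, Ek_eq in *.
    set (p := t ^ (2*n)) in *.
    match goal with |- ?L = ?R => match type of Hode with ?e = 0 =>
      assert (Hdiff : L - R = 4 * INR (n+1) * p * t * e) by (field; lra) end end.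
    rewrite Hode, Rmult_0_r in Hdiff. lra.
Qed.

Lemma prof1_is_derive n k j (t : R) : (j <= 1)%nat ->
  is_derive (prof1 n k (lag_param n j) j) t
    (- pot n (Ek n k + 2 * INR j) t * prof n k (lag_param n j) j t).
Proof.
  intros Hj. destruct j as [|[|]]; [| |lia].
  - rewrite Rmult_0_r, Rplus_0_r. apply prof1_0_is_derive.
  - change (INR 1) with 1. rewrite Rmult_1_r. apply prof1_1_is_derive.
Qed.

Section ProfileBounds.
Variables (n k : nat) (a : R).
Hypothesis Ha : -1/2 <= a.
Let K : R := INR k + 1.
Let c0 : R := lag_coef k a 0.

(* On [[0, s0]] one has [Xn <= 1 / (6 K)], where [lagP] is within [c0 / 2] of [c0]. *)
Definition s0 : R := Rpower (/ (6 * (INR k + 1))) (/ INR (2*n+2)).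

Lemma s0_spec : 0 < s0 /\ s0 ^ (2*n+2) = / (6 * K) /\ s0 <= 1.
Proof.
  pose proof (INR_plus_1_ge_1 k) as HK. fold K in HK.
  assert (Hpos : 0 < s0) by apply exp_pos.
  assert (Hpow : s0 ^ (2*n+2) = / (6 * K))
    by (apply pow_Rpower_inv; [apply Rinv_0_lt_compat; lra | lia]).
  repeat split; [exact Hpos | exact Hpow|].
  destruct (Rle_or_lt s0 1) as [|Hs]; [assumption|].
  pose proof (Rlt_pow_R1 s0 (2*n+2) Hs ltac:(lia)).
  assert (/ (6 * K) <= 1) by (rewrite <- Rinv_1; apply Rinv_le_contravar; lra).
  lra.
Qed.

Lemma Xn_near_0 t : 0 <= t <= s0 -> 2 * K * Xn n t <= 1/3 /\ Xn n t <= 1.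
Proof.
  intros Ht. destruct s0_spec as [Hs0 [Hpow Hs1]].
  pose proof (INR_plus_1_ge_1 k) as HK. fold K in HK. pose proof (INR_plus_1_pos n).
  pose proof (Xn_nonneg n t). pose proof (pow_le t (2*n+2) ltac:(lra)).
  assert (t ^ (2*n+2) <= / (6 * K)) by (rewrite <- Hpow; apply pow_incr; lra).
  assert (Xn n t <= t ^ (2*n+2)).
  { unfold Xn. apply Rle_div_l; [lra|]. rewrite plus_INR in *. simpl INR in *.
    pose proof (pos_INR n). nra. }
  assert (2 * K * / (6 * K) = 1/3) by (field; lra).
  assert (/ (6 * K) <= 1) by (rewrite <- Rinv_1; apply Rinv_le_contravar; lra).
  split; nra.
Qed.

Lemma lag_exp_near_0 x : 0 <= x -> 2 * K * x <= 1/3 -> x <= 1 ->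
  Rabs (lag_exp k a x) <= 3/2 * c0 /\ c0 ^ 2 / 12 <= lag_exp k a x ^ 2 /\
  Rabs (lag_exp1 k a x) <= 7 * K * c0.
Proof.
  intros Hx0 Hx Hx1.
  pose proof (lag_coef_0_pos k a Ha) as Hc0. pose proof (INR_plus_1_ge_1 k) as HK. fold c0 in Hc0. fold K in HK.
  pose proof (lagP_near_0 k a Ha x Hx0 Hx) as Hy. fold c0 K in Hy.
  apply Rabs_le_between in Hy.
  pose proof (Rabs_lagP1_near_0 k a Ha x Hx0 Hx) as Hy1. fold c0 K in Hy1.
  assert (He1 : exp (- x / 2) <= 1) by (apply exp_le_one; lra).
  assert (He0 : 0 < exp (- x / 2)) by apply exp_pos.
  assert (He2 : 1/3 <= exp (- x / 2) ^ 2).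
  { simpl. rewrite Rmult_1_r, <- exp_plus. replace (- x / 2 + - x / 2) with (- x) by field.
    assert (exp (-1) * exp 1 = 1) by (rewrite <- exp_plus; replace (-1 + 1) with 0 by ring; apply exp_0).
    assert (exp (-1) <= exp (- x))
      by (destruct (Req_dec x 1) as [->|]; [lra | apply Rlt_le, exp_increasing; lra]).
    pose proof exp_le_3. pose proof (exp_pos 1). nra. }
  unfold lag_exp, lag_exp1. split; [|split].
  - rewrite Rabs_mult, !Rabs_right by lra. nra.
  - rewrite Rpow_mult_distr. assert (c0 ^ 2 / 4 <= lagP k a x ^ 2) by (simpl; nra). nra.
  - rewrite Rabs_mult, Rabs_right by lra.
    pose proof (Rabs_triang (lagP1 k a x) (- (lagP k a x / 2))) as Htri.
    rewrite Rabs_Ropp, Rabs_div, (Rabs_right 2), (Rabs_right (lagP k a x)) in Htri by lra.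
    apply Rle_trans with (Rabs (lagP1 k a x - lagP k a x / 2)).
    { rewrite <- (Rmult_1_l (Rabs (_ - _))) at 2. apply Rmult_le_compat_r; [apply Rabs_pos | lra]. }
    unfold Rminus. assert (c0 <= K * c0) by nra. lra.
Qed.

Lemma prof_near_0 j t : (j <= 1)%nat -> 0 <= t <= s0 ->
  Rabs (prof n k a j t) <= 2 * c0 /\ Rabs (prof1 n k a j t) <= 16 * K * c0.
Proof.
  intros Hj Ht. destruct s0_spec as [Hs0 [Hpow Hs1]].
  pose proof (lag_coef_0_pos k a Ha) as Hc0. pose proof (INR_plus_1_ge_1 k) as HK. fold c0 in Hc0. fold K in HK.
  destruct (Xn_near_0 t Ht) as [HX HX1].
  destruct (lag_exp_near_0 (Xn n t) (Xn_nonneg n t) HX HX1) as [Hf0 [_ Hf1]].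
  assert (Htj : forall m, 0 <= t ^ m <= 1) by (split; [apply pow_le | apply pow_le_one]; lra).
  assert (HIj : 0 <= INR j <= 1) by (split; [apply pos_INR | apply (le_INR j 1); exact Hj]).
  pose proof (Htj j). pose proof (Htj (pred j)). pose proof (Htj (2*n+1+j)%nat).
  pose proof (Rabs_pos (lag_exp k a (Xn n t))). pose proof (Rabs_pos (lag_exp1 k a (Xn n t))).
  unfold prof, prof1. split.
  - rewrite Rabs_mult, (Rabs_right (t ^ j)) by lra. nra.
  - eapply Rle_trans; [apply Rabs_triang|].
    rewrite !Rabs_mult, (Rabs_right (INR j)), (Rabs_right (t ^ pred j)), (Rabs_right 2),
      (Rabs_right (t ^ (2*n+1+j))) by lra.
    assert (INR j * t ^ pred j <= 1) by nra.
    assert (2 * t ^ (2*n+1+j) <= 2) by lra.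
    nra.
Qed.

Lemma lag_exp_Xn_decay : exists B, forall t, (1 + t ^ (2*n+2)) * Rabs (lag_exp k a (Xn n t)) <= B.
Proof.
  destruct (exp_neg_half_poly_bounded (lag_coef k a) (S (S k))) as [B1 HB1].
  destruct (exp_neg_half_poly_bounded (coef_shift (lag_coef k a)) (S (S (S k)))) as [B2 HB2].
  exists (B1 + INR (n+1) * B2). intros t.
  pose proof (Xn_nonneg n t) as HX. pose proof (INR_plus_1_pos n).
  specialize (HB1 _ HX). specialize (HB2 _ HX). rewrite <- Rmult_poly, Rabs_mult, (Rabs_right (Xn n t)) in HB2 by lra.
  replace (1 + t ^ (2*n+2)) with (1 + INR (n+1) * Xn n t) by (unfold Xn; field; lra).
  unfold lag_exp, lagP. rewrite Rabs_mult, (Rabs_right (exp _)) by (apply Rle_ge, Rlt_le, exp_pos).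
  pose proof (exp_pos (- Xn n t / 2)). pose proof (Rabs_pos (poly (lag_coef k a) (S (S k)) (Xn n t))).
  assert (INR (n+1) * (exp (- Xn n t / 2) * (Xn n t * Rabs (poly (lag_coef k a) (S (S k)) (Xn n t))))
          <= INR (n+1) * B2) by (apply Rmult_le_compat_l; lra).
  nra.
Qed.

Lemma prof_bounded j : (j <= 1)%nat -> exists B, forall t, 0 <= t -> Rabs (prof n k a j t) <= B.
Proof.
  intros Hj. destruct lag_exp_Xn_decay as [B HB]. exists B. intros t Ht. specialize (HB t).
  pose proof (pow_le_one_plus_pow t j (2*n+2) Ht ltac:(lia)).
  pose proof (Rabs_pos (lag_exp k a (Xn n t))). pose proof (pow_le t j Ht).
  unfold prof. rewrite Rabs_mult, (Rabs_right (t ^ j)) by lra. nra.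
Qed.

End ProfileBounds.

(** * Improper integrals of nonnegative functions *)

Lemma nondecreasing_cvg_p_infty (F : R -> R) B :
  (forall x y, x <= y -> F x <= F y) -> (forall x, F x <= B) ->
  exists l, filterlim F (Rbar_locally p_infty) (locally l) /\ forall x, F x <= l.
Proof.
  intros Hmono HB.
  destruct (completeness (fun y => exists x, y = F x)) as [l [Hub Hleast]].
  { exists B. intros y [x ->]. apply HB. }
  { exists (F 0). now exists 0. }
  assert (HF : forall x, F x <= l) by (intros x; apply Hub; now exists x).
  exists l. split; [|exact HF].
  apply filterlim_locally. intros eps.
  assert (Hx0 : exists x0, l - eps < F x0).
  { apply NNPP. intros Hno. enough (l <= l - eps) by (destruct eps; simpl in *; lra).
    apply Hleast. intros y [x ->]. apply Rnot_lt_le. intros Hlt. apply Hno. now exists x. }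
  destruct Hx0 as [x0 Hx0]. exists x0. intros x Hx.
  pose proof (Hmono x0 x ltac:(lra)). pose proof (HF x).
  change (Rabs (F x - l) < eps). rewrite Rabs_left1 by lra. lra.
Qed.

Lemma nondecreasing_cvg_m_infty (F : R -> R) B :
  (forall x y, x <= y -> F x <= F y) -> (forall x, B <= F x) ->
  exists l, filterlim F (Rbar_locally m_infty) (locally l) /\ forall x, l <= F x.
Proof.
  intros Hmono HB.
  destruct (nondecreasing_cvg_p_infty (fun x => - F (- x)) (- B)) as [l [Hlim Hle]].
  { intros x y Hxy. pose proof (Hmono (- y) (- x) ltac:(lra)). lra. }
  { intros x. pose proof (HB (- x)). lra. }
  exists (- l). split.
  - apply filterlim_locally. intros eps.
    destruct (proj1 (filterlim_locally _ l) Hlim eps) as [M HM].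
    exists (- M). intros x Hx. specialize (HM (- x) ltac:(lra)).
    change (Rabs (- F (- - x) - l) < eps) in HM. change (Rabs (F x - - l) < eps).
    rewrite Ropp_involutive in HM. rewrite <- Rabs_Ropp. now replace (- (F x - - l)) with (- F x - l) by ring.
  - intros x. specialize (Hle (- x)). rewrite Ropp_involutive in Hle. lra.
Qed.

Section ImproperIntegral.
Variables (f : R -> R) (M : R).
Hypothesis Hcont : forall t, continuous f t.
Hypothesis Hnonneg : forall t, 0 <= f t.
Hypothesis Hdecay : forall t, f t * (1 + t ^ 2) <= M.

Let F (x : R) : R := RInt f 0 x.

Lemma ex_RInt_of_continuous x y : ex_RInt f x y.
Proof. apply (ex_RInt_continuous (V := R_CompleteNormedModule)). intros; apply Hcont. Qed.

Lemma sub_primitive x y : F y - F x = RInt f x y.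
Proof.
  unfold F. rewrite <- (RInt_Chasles f 0 x y) by apply ex_RInt_of_continuous.
  unfold plus. simpl. ring.
Qed.

Lemma RInt_cont_nonneg x y : x <= y -> 0 <= RInt f x y.
Proof. intros Hxy. apply RInt_ge_0; [exact Hxy | apply ex_RInt_of_continuous | intros; apply Hnonneg]. Qed.

(* [M / (1 + t^2)] dominates [f] and integrates to [M (atan y - atan x) <= M PI]. *)
Lemma RInt_cont_le x y : x <= y -> RInt f x y <= 4 * M.
Proof.
  intros Hxy.
  assert (HM : 0 <= M) by (specialize (Hdecay 0); specialize (Hnonneg 0); simpl in Hdecay; nra).
  assert (Hg : is_RInt (fun t => M * / (1 + t ^ 2)) x y (M * atan y - M * atan x)).
  { apply (is_RInt_derive (fun t => M * atan t)).
    - intros t _. eapply is_derive_ext_eq; [| | exact (is_derive_Rscal _ M t _ (is_derive_atan t))].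
      + reflexivity.
      + unfold Rsqr. f_equal. f_equal. ring.
    - intros t _. apply (ex_derive_continuous (fun t => M * / (1 + t ^ 2))). auto_derive.
      pose proof (pow2_ge_0 t). simpl in *. nra. }
  apply Rle_trans with (M * atan y - M * atan x).
  - rewrite <- (is_RInt_unique _ _ _ _ Hg).
    apply RInt_le; [exact Hxy | apply ex_RInt_of_continuous | eexists; exact Hg|].
    intros t _. specialize (Hdecay t). pose proof (pow2_ge_0 t).
    apply Rmult_le_reg_r with (1 + t ^ 2); [lra|]. field_simplify; lra.
  - pose proof PI_4. pose proof (atan_bound x). pose proof (atan_bound y). nra.
Qed.

Lemma RInt_le_RInt_gen x y : x <= y ->
  RInt f x y <= RInt_gen f (Rbar_locally m_infty) (Rbar_locally p_infty).
Proof.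
  intros Hxy.
  assert (HF0 : F 0 = 0) by apply (RInt_point (V := R_CompleteNormedModule)).
  assert (Hmono : forall x y, x <= y -> F x <= F y)
    by (intros a b Hab; pose proof (RInt_cont_nonneg a b Hab); rewrite <- sub_primitive in H; lra).
  assert (Hbound : forall x, - (4 * M) <= F x <= 4 * M).
  { intros z. destruct (Rle_or_lt 0 z) as [Hz|Hz].
    - pose proof (RInt_cont_le 0 z Hz). pose proof (Hmono 0 z Hz). rewrite <- sub_primitive in H. lra.
    - pose proof (RInt_cont_le z 0 ltac:(lra)). pose proof (Hmono z 0 ltac:(lra)).
      rewrite <- sub_primitive in H. lra. }
  destruct (nondecreasing_cvg_p_infty F (4 * M) Hmono (fun z => proj2 (Hbound z))) as [lb [Hlb Hub]].
  destruct (nondecreasing_cvg_m_infty F (- (4 * M)) Hmono (fun z => proj1 (Hbound z))) as [la [Hla Hlw]].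
  assert (HD : forall x, is_derive F x (f x)).
  { intros z. apply (is_derive_RInt f F 0 z); [|apply Hcont].
    apply filter_forall. intros b. apply (RInt_correct (V := R_CompleteNormedModule)), ex_RInt_of_continuous. }
  assert (Hall : forall P : R * R -> Prop, (forall ab, P ab) ->
    filter_prod (Rbar_locally m_infty) (Rbar_locally p_infty) P).
  { intros P HP. apply Filter_prod with (fun _ => True) (fun _ => True); try apply filter_true.
    intros; apply HP. }
  assert (Hgen : is_RInt_gen f (Rbar_locally m_infty) (Rbar_locally p_infty) (lb - la)).
  { apply (is_RInt_gen_ext (Derive F)).
    - apply Hall. intros ab z _. apply is_derive_unique, HD.
    - apply is_RInt_gen_Derive; [apply Hall; intros ab z _; eexists; apply HD | | exact Hla | exact Hlb].
      apply Hall. intros ab z _. apply (continuous_ext f); [|apply Hcont].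
      intros; symmetry; apply is_derive_unique, HD. }
  rewrite (is_RInt_gen_unique _ _ Hgen), <- sub_primitive.
  pose proof (Hub y). pose proof (Hlw x). lra.
Qed.

End ImproperIntegral.

Lemma RInt_scal_pow C m s :
  RInt (fun t => C * t ^ m) 0 s = C * s ^ S m / INR (S m).
Proof.
  pose proof (lt_0_INR (S m) ltac:(lia)).
  apply is_RInt_unique.
  replace (C * s ^ S m / INR (S m)) with (minus (C / INR (S m) * s ^ S m) (C / INR (S m) * 0 ^ S m))
    by (rewrite pow_i by lia; set (N := INR (S m)) in *; unfold minus, plus, opp; simpl; field; lra).
  apply (is_RInt_derive (fun t => C / INR (S m) * t ^ S m)).
  - intros x _. eapply is_derive_ext_eq;
      [| | exact (is_derive_Rscal _ (C / INR (S m)) x _ (is_derive_Rpow_id (S m) x))].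
    + reflexivity.
    + simpl pred. field. lra.
  - intros x _. apply (ex_derive_continuous (fun t => C * t ^ m)). auto_derive. exact I.
Qed.

Section NormLowerBound.
Variables (n k : nat) (a : R) (j : nat) (u0 : R -> R).
Hypothesis Ha : -1/2 <= a.
Hypothesis Hj : (j <= 1)%nat.
Hypothesis Hu0 : forall t, u0 t = prof n k a j t.
Let f (t : R) : R := (t ^ n * u0 t) ^ 2.
Let K : R := INR k + 1.
Let c0 : R := lag_coef k a 0.

Lemma weighted_sq_eq t : f t = (t * t) ^ (n + j) * lag_exp k a (Xn n t) ^ 2.
Proof. unfold f. rewrite Hu0. unfold prof. rewrite pow_add, !Rpow_mult_distr. simpl. ring. Qed.

Lemma weighted_sq_continuous t : continuous f t.
Proof.
  apply (continuous_ext (fun t => (t ^ n * prof n k a j t) ^ 2)); [intros; unfold f; now rewrite Hu0|].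
  apply (ex_derive_continuous (fun t => (t ^ n * prof n k a j t) ^ 2)). eexists.
  apply (is_derive_pow (fun t => t ^ n * prof n k a j t) 2 t).
  apply (is_derive_Rmult _ _ t _ _ (is_derive_Rpow_id n t) (prof_is_derive n k a j t)).
Qed.

Lemma weighted_sq_decay : exists M, forall t, f t * (1 + t ^ 2) <= M.
Proof.
  destruct (lag_exp_Xn_decay n k a) as [B HB]. exists (2 * B ^ 2). intros t.
  rewrite weighted_sq_eq. set (s := t * t). assert (Hs : 0 <= s) by (unfold s; nra).
  specialize (HB t).
  replace (1 + t ^ (2*n+2)) with (1 + s ^ (n+1)) in HB
    by (unfold s; rewrite Rpow_mult_distr, <- pow_add; do 2 f_equal; lia).
  replace (t ^ 2) with s by (unfold s; ring).
  set (Y := 1 + s ^ (n+1)) in *. set (p := Rabs (lag_exp k a (Xn n t))) in *.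
  rewrite <- (pow2_abs (lag_exp k a (Xn n t))). fold p.
  pose proof (pow_le_one_plus_pow s (n+j) (n+1) Hs ltac:(lia)) as Hnj.
  pose proof (pow_le_one_plus_pow s 1 (n+1) Hs ltac:(lia)) as H1. rewrite pow_1 in H1.
  fold Y in Hnj, H1.
  pose proof (pow_le s (n+j) Hs). pose proof (pow_le s (n+1) Hs).
  assert (0 <= p) by apply Rabs_pos.
  assert (HY : 1 <= Y) by (unfold Y; lra).
  assert (0 <= Y * p) by (apply Rmult_le_pos; lra).
  assert (Hsq : (Y * p) ^ 2 <= B ^ 2) by (apply pow_incr; lra).
  assert (s ^ (n + j) * p ^ 2 <= Y * p ^ 2) by (apply Rmult_le_compat_r; [nra | exact Hnj]).
  assert (s ^ (n + j) * p ^ 2 * (1 + s) <= Y * p ^ 2 * (2 * Y))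
    by (apply Rmult_le_compat; [apply Rmult_le_pos; [lra | apply pow2_ge_0] | lra | assumption | lra]).
  nra.
Qed.

(* On [[0, s0]]: [f t >= c0^2 / 12 * t^(2n+2)], and [s0^(2n+3) >= s0^(2n+4) = (6K)^-2]. *)
Lemma weighted_sq_RInt_gen_ge :
  c0 ^ 2 / (432 * (2 * INR n + 3) * K ^ 2) <=
  RInt_gen f (Rbar_locally m_infty) (Rbar_locally p_infty).
Proof.
  destruct weighted_sq_decay as [M HM].
  destruct (s0_spec n k) as [Hs0 [Hpow Hs1]]. fold K in Hpow.
  pose proof (INR_plus_1_ge_1 k) as HK. fold K in HK. pose proof (lag_coef_0_pos k a Ha) as Hc0. fold c0 in Hc0.
  assert (Hn3 : 0 < 2 * INR n + 3) by (pose proof (pos_INR n); lra).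
  eapply Rle_trans; [| apply (RInt_le_RInt_gen f M weighted_sq_continuous
                                (fun t => pow2_ge_0 _) HM 0 (s0 n k)); lra].
  eapply Rle_trans; [| apply (RInt_le (fun t => c0 ^ 2 / 12 * t ^ (2*n+2)) f 0 (s0 n k)); try lra].
  - rewrite RInt_scal_pow.
    replace (S (2*n+2)) with (S (2*n+1) + 1)%nat by lia. rewrite pow_add.
    replace (S (2*n+1)) with (2*n+2)%nat by lia. rewrite Hpow, pow_1.
    replace (INR (2*n+2+1)) with (2 * INR n + 3) by (rewrite !plus_INR, mult_INR; simpl; ring).
    pose proof (pow_le_pow_of_le_one (s0 n k) 1 (2*n+2) ltac:(lra) ltac:(lia)) as Hs0K.
    rewrite Hpow, pow_1 in Hs0K.
    replace (c0 ^ 2 / (432 * (2 * INR n + 3) * K ^ 2))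
      with (c0 ^ 2 / 12 * (/ (6 * K) * / (6 * K)) / (2 * INR n + 3)) by (field; lra).
    unfold Rdiv. apply Rmult_le_compat_r; [apply Rlt_le, Rinv_0_lt_compat; lra|].
    apply Rmult_le_compat_l; [pose proof (pow2_ge_0 c0); lra|].
    apply Rmult_le_compat_l; [apply Rlt_le, Rinv_0_lt_compat; lra | exact Hs0K].
  - apply ex_RInt_of_continuous. intros t. apply (ex_derive_continuous (fun t => c0 ^ 2 / 12 * t ^ (2*n+2))).
    auto_derive. exact I.
  - apply ex_RInt_of_continuous, weighted_sq_continuous.
  - intros t Ht. rewrite weighted_sq_eq.
    destruct (Xn_near_0 n k t ltac:(lra)) as [HX HX1].
    destruct (lag_exp_near_0 k a Ha (Xn n t) (Xn_nonneg n t) HX HX1) as [_ [Hf _]].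
    replace (t ^ (2*n+2)) with ((t * t) ^ (n+1)) by (rewrite Rpow_mult_distr, <- pow_add; f_equal; lia).
    assert (Htt : 0 <= t * t <= 1) by (split; nra).
    pose proof (pow_le_pow_of_le_one (t * t) (n+j) (n+1) Htt ltac:(lia)).
    pose proof (pow_le (t * t) (n+1) (proj1 Htt)). pose proof (pow2_ge_0 c0).
    fold c0 in Hf. nra.
Qed.

End NormLowerBound.

Section DerivativeBound.
Variables (n : nat) (E K c0 s : R) (u u1 : R -> R).
Hypothesis HK : 1 <= K.
Hypothesis HKE : K <= E.
Hypothesis Hs : 0 < s <= 1.
Hypothesis Hspow : s ^ (2*n+2) = / (6 * K).
Hypothesis Hu : forall t : R, is_derive u t (u1 t).
Hypothesis Hu1 : forall t : R, is_derive u1 t (- pot n E t * u t).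
Hypothesis Hbounded : exists B, forall t, 0 <= t -> Rabs (u t) <= B.
Hypothesis Hnear0 : forall t, 0 <= t <= s -> Rabs (u t) <= 2 * c0 /\ Rabs (u1 t) <= 16 * K * c0.

Lemma inv_6K_le : / (6 * K) <= 1/6.
Proof. apply Rle_trans with (/ 6); [apply Rinv_le_contravar|]; lra. Qed.

(* [pot s >= s^(2n+2) (E - s^(2n+2))] with [s^(2n+2) = 1 / (6 K) >= 1 / (6 E)]. *)
Lemma inv_pot_s_le : / pot n E s <= 8.
Proof.
  pose proof inv_6K_le as Hx1. pose proof (Rinv_0_lt_compat (6 * K) ltac:(lra)) as Hx0.
  set (x := / (6 * K)) in *.
  assert (HEx : / 6 <= E * x).
  { unfold x. replace (E * / (6 * K)) with (E / K / 6) by (field; lra).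
    assert (1 <= E / K) by (apply Rle_div_r; lra). lra. }
  assert (Hpot : 5 / 36 <= pot n E s).
  { rewrite pot_eq, Hspow. fold x.
    pose proof (pow_le_pow_of_le_one s (2*n) (2*n+2) ltac:(lra) ltac:(lia)) as Hs2n.
    rewrite Hspow in Hs2n. fold x in Hs2n.
    apply Rle_trans with (x * (E - x)); [nra | apply Rmult_le_compat_r; lra]. }
  replace 8 with (/ (1/8)) by field. apply Rinv_le_contravar; lra.
Qed.

Lemma u1_sq_le_nonneg t : 0 <= t -> u1 t * u1 t <= 4104 * E ^ 2 * (K ^ 2 * c0 ^ 2).
Proof.
  intros Ht. assert (HE2 : 1 <= E ^ 2) by (simpl; nra).
  assert (HKc : 0 <= K ^ 2 * c0 ^ 2) by (apply Rmult_le_pos; apply pow2_ge_0).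
  destruct (Rle_or_lt t s) as [Hts|Hts].
  - pose proof (sq_le_of_Rabs_le _ _ (proj2 (Hnear0 t (conj Ht Hts)))).
    apply Rle_trans with (256 * (K ^ 2 * c0 ^ 2)); [simpl in *; nra|].
    apply Rmult_le_compat_r; [exact HKc | nra].
  - pose proof inv_6K_le.
    pose proof (u1_sq_le n E u u1 ltac:(lra) Hu Hu1 s (proj1 Hs) ltac:(lra) Hbounded t ltac:(lra)) as Hsturm.
    destruct (Hnear0 s ltac:(lra)) as [Hus Hu1s].
    apply sq_le_of_Rabs_le in Hus, Hu1s.
    assert (Hquot : u1 s * u1 s / pot n E s <= 2048 * (K ^ 2 * c0 ^ 2)).
    { unfold Rdiv. pose proof inv_pot_s_le. assert (0 < / pot n E s).
      { apply Rinv_0_lt_compat, pot_pos; [lra|]. rewrite Hspow. lra. }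
      apply Rle_trans with (256 * (K ^ 2 * c0 ^ 2) * 8); [|lra].
      apply Rmult_le_compat; [nra | lra | simpl in *; nra | lra]. }
    assert (Hc0K : c0 ^ 2 <= K ^ 2 * c0 ^ 2).
    { pose proof (pow2_ge_0 c0). assert (1 <= K ^ 2) by (simpl; nra). nra. }
    assert (Hus' : u s * u s <= 4 * (K ^ 2 * c0 ^ 2)) by (simpl in *; nra).
    apply Rle_trans with (2 * E ^ 2 * (2052 * (K ^ 2 * c0 ^ 2))); [|lra].
    apply Rle_trans with (2 * E ^ 2 * (u1 s * u1 s / pot n E s + u s * u s)); [exact Hsturm|].
    apply Rmult_le_compat_l; [nra | lra].
Qed.

End DerivativeBound.

Definition deriv_const (n : nat) : R := 36936 * (432 * (2 * INR n + 3)).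

Lemma deriv_const_ge_1 n : 1 <= deriv_const n.
Proof. unfold deriv_const. pose proof (pos_INR n). lra. Qed.

Lemma lag_param_ge n j : -1/2 <= lag_param n j.
Proof.
  unfold lag_param. rewrite INR_2n2. pose proof (INR_plus_1_pos n). pose proof (pos_INR j).
  assert (1 <= INR (n+1)) by (rewrite plus_INR; simpl; pose proof (pos_INR n); lra).
  apply (Rle_div_r (-1/2)); lra.
Qed.

Lemma K_le_Ek n k : INR k + 1 <= Ek n k.
Proof. unfold Ek. rewrite <- S_INR. apply le_INR. nia. Qed.

Lemma inv_sqrt_mul_sq_le N c0 L : 0 < L -> 0 < c0 -> c0 ^ 2 / L <= N -> (/ sqrt N * c0) ^ 2 <= L.
Proof.
  intros HL Hc0 HN.
  assert (HN0 : 0 < N).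
  { eapply Rlt_le_trans; [| exact HN]. apply Rdiv_lt_0_compat; [apply pow_lt|]; assumption. }
  rewrite Rpow_mult_distr, pow_inv.
  replace (sqrt N ^ 2) with N by (simpl; rewrite Rmult_1_r, sqrt_sqrt; lra).
  apply Rmult_le_reg_l with N; [exact HN0|]. rewrite <- Rmult_assoc, Rinv_r, Rmult_1_l by lra.
  apply Rmult_le_reg_r with (/ L); [apply Rinv_0_lt_compat; exact HL|].
  replace (N * L * / L) with N by (field; lra). exact HN.
Qed.

Lemma prof1_sq_le n k j t : (j <= 1)%nat ->
  prof1 n k (lag_param n j) j t * prof1 n k (lag_param n j) j t
  <= 4104 * (Ek n k + 2 * INR j) ^ 2 * ((INR k + 1) ^ 2 * lag_coef k (lag_param n j) 0 ^ 2).
Proof.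
  intros Hj. set (a := lag_param n j). pose proof (lag_param_ge n j) as Ha. fold a in Ha.
  assert (Hnonneg : forall t, 0 <= t -> prof1 n k a j t * prof1 n k a j t
          <= 4104 * (Ek n k + 2 * INR j) ^ 2 * ((INR k + 1) ^ 2 * lag_coef k a 0 ^ 2)).
  { destruct (s0_spec n k) as [Hs0 [Hpow Hs1]].
    pose proof (K_le_Ek n k). pose proof (pos_INR j).
    exact (u1_sq_le_nonneg n (Ek n k + 2 * INR j) (INR k + 1) (lag_coef k a 0) (s0 n k)
             (prof n k a j) (prof1 n k a j) (INR_plus_1_ge_1 k) ltac:(lra)
             (conj Hs0 Hs1) Hpow (prof_is_derive n k a j)
             (fun t => prof1_is_derive n k j t Hj) (prof_bounded n k a j Hj)
             (fun t Ht => prof_near_0 n k a Ha j t Hj Ht)). }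
  destruct (Rle_or_lt 0 t) as [Ht|Ht]; [exact (Hnonneg t Ht)|].
  assert (Hsym : Rsqr (prof1 n k a j t) = Rsqr (prof1 n k a j (- t))).
  { rewrite (Rsqr_abs (prof1 n k a j t)), (Rsqr_abs (prof1 n k a j (- t))), Rabs_prof1_opp
      by exact Hj.
    reflexivity. }
  unfold Rsqr in Hsym. rewrite Hsym. apply Hnonneg. lra.
Qed.

Lemma normalized_sq_le c c0 q K E Eo L :
  0 <= L -> 1 <= K <= E -> 0 <= Eo <= 3 * E ->
  (c * c0) ^ 2 <= L * K ^ 2 -> q <= 4104 * Eo ^ 2 * (K ^ 2 * c0 ^ 2) ->
  c ^ 2 * q <= 36936 * L * (E ^ 3 * E ^ 3).
Proof.
  intros HL HK HEo Hc Hq.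
  assert (HK4 : K ^ 2 * K ^ 2 <= E ^ 2 * E ^ 2)
    by (apply Rmult_le_compat; try apply pow_incr; simpl; nra).
  apply Rle_trans with (4104 * Eo ^ 2 * K ^ 2 * (c * c0) ^ 2).
  { replace (4104 * Eo ^ 2 * K ^ 2 * (c * c0) ^ 2) with (c ^ 2 * (4104 * Eo ^ 2 * (K ^ 2 * c0 ^ 2)))
      by ring.
    apply Rmult_le_compat_l; [apply pow2_ge_0 | exact Hq]. }
  apply Rle_trans with (4104 * (9 * E ^ 2) * K ^ 2 * (L * K ^ 2)).
  - apply Rmult_le_compat; [simpl; nra | apply pow2_ge_0 | | exact Hc].
    apply Rmult_le_compat_r; [apply pow2_ge_0 | simpl; nra].
  - replace (4104 * (9 * E ^ 2) * K ^ 2 * (L * K ^ 2)) with (36936 * L * E ^ 2 * (K ^ 2 * K ^ 2))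
      by ring.
    replace (36936 * L * (E ^ 3 * E ^ 3)) with (36936 * L * E ^ 2 * (E ^ 2 * E ^ 2)) by ring.
    apply Rmult_le_compat_l; [apply Rmult_le_pos; [lra | apply pow2_ge_0] | exact HK4].
Qed.

Lemma Rabs_Derive_normalized_prof n k j (u0 : R -> R) t : (j <= 1)%nat ->
  (forall t, u0 t = prof n k (lag_param n j) j t) ->
  Rabs (Derive (fun t => / wL2norm n u0 * u0 t) t) <= deriv_const n * Ek n k ^ 3.
Proof.
  intros Hj Hu0.
  set (a := lag_param n j). pose proof (lag_param_ge n j) as Ha. fold a in Ha.
  set (c := / wL2norm n u0). set (L := 432 * (2 * INR n + 3)).
  pose proof (K_le_Ek n k). pose proof (INR_plus_1_ge_1 k). pose proof (pos_INR j).
  assert (INR j <= 1) by (apply (le_INR j 1); exact Hj).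
  assert (HL : 0 < L) by (unfold L; pose proof (pos_INR n); lra).
  assert (Hnorm : (c * lag_coef k a 0) ^ 2 <= L * (INR k + 1) ^ 2).
  { apply inv_sqrt_mul_sq_le; [apply Rmult_lt_0_compat; [lra | apply pow_lt; lra] | |].
    - apply lag_coef_0_pos, Ha.
    - exact (weighted_sq_RInt_gen_ge n k a j u0 Ha Hj Hu0). }
  assert (HD : Derive (fun t => c * u0 t) t = c * prof1 n k a j t).
  { apply is_derive_unique, is_derive_Rscal.
    apply (is_derive_ext (prof n k a j)); [intros; symmetry; apply Hu0 | apply prof_is_derive]. }
  rewrite HD. apply Rabs_le_of_sq_le; [apply deriv_const_ge_1 | apply pow_le; lra|].
  replace (c * prof1 n k a j t * (c * prof1 n k a j t))
    with (c ^ 2 * (prof1 n k a j t * prof1 n k a j t)) by ring.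
  unfold deriv_const. fold L.
  apply (normalized_sq_le c (lag_coef k a 0) _ (INR k + 1) (Ek n k) (Ek n k + 2 * INR j) L);
    [lra | lra | lra | exact Hnorm | apply prof1_sq_le, Hj].
Qed.

Lemma v0_eq_prof n k t : v0 n k t = prof n k (lag_param n 0) 0 t.
Proof.
  pose proof (INR_plus_1_pos n).
  unfold v0, prof, lag_exp, Xn, lag_param. rewrite lagP_eq, pow_O, Rmult_1_l, INR_2n2.
  replace ((2 * INR 0 - 1) / (2 * INR (n+1))) with (- / (2 * INR (n+1))) by (simpl; field; lra).
  f_equal. f_equal. field. lra.
Qed.

Lemma w0_eq_prof n k t : w0 n k t = prof n k (lag_param n 1) 1 t.
Proof.
  pose proof (INR_plus_1_pos n).
  unfold w0, prof, lag_exp, Xn, lag_param. rewrite lagP_eq, pow_1, INR_2n2.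
  replace ((2 * INR 1 - 1) / (2 * INR (n+1))) with (/ (2 * INR (n+1))) by (simpl; field; lra).
  replace (- (t ^ (2*n+2) / INR (n+1)) / 2) with (- t ^ (2*n+2) / (2 * INR (n+1))) by (field; lra).
  ring.
Qed.

Lemma pow3_le_Rpower_Ek n k : Ek n k ^ 3 <= Rpower (Ek n k) (7/2 - / INR (4*n+4)).
Proof.
  assert (HE : 1 <= Ek n k) by (pose proof (K_le_Ek n k); pose proof (pos_INR k); lra).
  rewrite <- Rpower_pow by lra. apply Rle_Rpower; [exact HE|].
  assert (4 <= INR (4*n+4)) by (rewrite plus_INR, mult_INR; simpl; pose proof (pos_INR n); nra).
  assert (/ INR (4*n+4) <= / 4) by (apply Rinv_le_contravar; lra).
  replace (INR 3) with 3 by (simpl; ring). lra.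
Qed.

Theorem mainTheorem4 (n : nat) :
  exists C1 : R, 0 < C1 /\
    forall (k : nat) (t : R),
      Rabs (Derive (v n k) t) <= C1 * Rpower (Ek n k) (7/2 - / INR (4*n+4)) /\
      Rabs (Derive (w n k) t) <= C1 * Rpower (Ek n k) (7/2 - / INR (4*n+4)).
Proof.
  exists (deriv_const n). pose proof (deriv_const_ge_1 n). split; [lra|].
  intros k t.
  assert (Hpow : deriv_const n * Ek n k ^ 3 <= deriv_const n * Rpower (Ek n k) (7/2 - / INR (4*n+4)))
    by (apply Rmult_le_compat_l; [lra | apply pow3_le_Rpower_Ek]).
  unfold v, w, c_const, d_const. split; eapply Rle_trans; try exact Hpow.
  - exact (Rabs_Derive_normalized_prof n k 0 (v0 n k) t ltac:(lia) (v0_eq_prof n k)).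
  - exact (Rabs_Derive_normalized_prof n k 1 (w0 n k) t ltac:(lia) (w0_eq_prof n k)).
Qed.
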